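(* Let $f$ be an entire function of finite order and let $n(r)$ denote the number of zeros of $f$ (counted with multiplicity) in the closed disk $\{|z|\le r\}$. Suppose there exist $r_0>0$ and $K>1$ such that $n(2r)\le K\,n(r)$ for all $r\ge r_0$. For $\mu>0$ let $F_\mu$ be the set of all $r\ge r_0$ such that \[ n(t)\le \left(\tfrac{t}{r}\right)^{\mu} n(r)\ \text{ for all } t\ge r \qquad\text{and}\qquad n(t)\ge \left(\tfrac{t}{r}\right)^{\mu} n(r)\ \text{ for all } r_0\le t\le r . \] Then for every $\delta>0$ there exists $\mu>0$ such that $\operatorname{meas}\bigl(F_\mu\cap[R,2R]\bigr)\ge (1-\delta)R$ for all $R\ge 2r_0$.
   Context: $\operatorname{meas}$ denotes one-dimensional Lebesgue measure on $\mathbb R$. *)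

From Stdlib Require Import Reals Lra List.
Open Scope R_scope.

Definition Cx : Type := (R * R)%type.
Definition C0 : Cx := (0, 0).
Definition C1 : Cx := (1, 0).
Definition Cadd (z w : Cx) : Cx := (fst z + fst w, snd z + snd w).
Definition Csub (z w : Cx) : Cx := (fst z - fst w, snd z - snd w).
Definition Cmul (z w : Cx) : Cx :=
  (fst z * fst w - snd z * snd w, fst z * snd w + snd z * fst w).
Fixpoint Cpow (z : Cx) (m : nat) : Cx :=
  match m with O => C1 | S k => Cmul z (Cpow z k) end.
Definition Cnorm (z : Cx) : R := sqrt (fst z ^ 2 + snd z ^ 2).

Definition Cdifferentiable (f : Cx -> Cx) (z : Cx) : Prop :=
  exists l : Cx, forall eps, 0 < eps -> exists d, 0 < d /\
    forall h : Cx, 0 < Cnorm h < d ->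
      Cnorm (Csub (Csub (f (Cadd z h)) (f z)) (Cmul l h)) <= eps * Cnorm h.

Definition entire (f : Cx -> Cx) : Prop := forall z, Cdifferentiable f z.

(* finite order: log log M(r) / log r bounded, i.e. |f z| <= exp(|z|^rho) for large |z| *)
Definition finite_order (f : Cx -> Cx) : Prop :=
  exists rho R0, 0 < rho /\ forall z, R0 <= Cnorm z ->
    Cnorm (f z) <= exp (Rpower (Cnorm z) rho).

Definition zero_mult (f : Cx -> Cx) (a : Cx) (m : nat) : Prop :=
  (1 <= m)%nat /\ exists g : Cx -> Cx, entire g /\ g a <> C0 /\
    forall z, f z = Cmul (Cpow (Csub z a) m) (g z).

Fixpoint sum_mult (l : list (Cx * nat)) : nat :=
  match l with nil => O | cons p l' => (snd p + sum_mult l')%nat end.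

Definition zero_counting (f : Cx -> Cx) (n : R -> R) : Prop :=
  forall r, 0 <= r -> exists l : list (Cx * nat),
    NoDup (map fst l) /\
    (forall z, (f z = C0 /\ Cnorm z <= r) <-> In z (map fst l)) /\
    (forall p, In p l -> zero_mult f (fst p) (snd p)) /\
    n r = INR (sum_mult l).

(* Lebesgue outer measure of E is >= c: every countable cover of E by closed
   intervals [a k, b k] has total length >= c. *)
Definition meas_ge (E : R -> Prop) (c : R) : Prop :=
  forall a b : nat -> R,
    (forall k, a k <= b k) ->
    (forall x, E x -> exists k, a k <= x <= b k) ->
    forall L, infinite_sum (fun k => b k - a k) L -> c <= L.

Definition F_set (n : R -> R) (r0 mu : R) (r : R) : Prop :=
  r0 <= r /\
  (forall t, r <= t -> n t <= Rpower (t / r) mu * n r) /\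
  (forall t, r0 <= t <= r -> Rpower (t / r) mu * n r <= n t).

(* Only three properties of [n] are used: it is natural-valued, nondecreasing
   (multiplicities of zeros are well defined), and doubling beyond [r0].
   Iterating the doubling inequality, [n t <= K (t/r)^nu n r] with [K <= 2^nu],
   so for [mu = m >= 2 nu] the defining inequalities of [F_mu] only need to be
   checked for [t] in [[r/2, 2r]].  There they follow, by Bernoulli's
   inequality, from one-sided slope bounds [|n t - n r| <= lam |t - r|] with
   [lam = m n(R) / (2 K R)].  Discretising [[R/2, 4R]] into cells of length
   [h <= 1/lam], a rising-sun (maximal-function) argument shows that the cells
   where a slope bound fails have total length at most [12 K^3 R / m], which is
   [<= delta R] for large [m]; the other points of [[R, 2R]] lie in [F_mu]. *)

From Stdlib Require Import Reals Lra Lia List ZArith Classical ClassicalEpsilon.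
Open Scope R_scope.

Lemma Cpow_real (s : R) (m : nat) : Cpow (s, 0) m = (s ^ m, 0).
Proof.
  induction m as [|m IH]; simpl; [reflexivity|].
  rewrite IH; unfold Cmul; simpl; f_equal; ring.
Qed.

Lemma Csub_shift (a : Cx) (s : R) : Csub (Cadd a (s, 0)) a = (s, 0).
Proof. destruct a; unfold Csub, Cadd; simpl; f_equal; ring. Qed.

Lemma Cnorm_real (s : R) : 0 <= s -> Cnorm (s, 0) = s.
Proof.
  intros Hs; unfold Cnorm; simpl.
  replace (s * (s * 1) + 0 * (0 * 1)) with (s * s) by ring.
  apply sqrt_square; lra.
Qed.

Lemma Cnorm_fst (z : Cx) : Rabs (fst z) <= Cnorm z.
Proof.
  unfold Cnorm. rewrite <- sqrt_Rsqr_abs. apply sqrt_le_1_alt.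
  unfold Rsqr; simpl. nra.
Qed.

Lemma Cnorm_snd (z : Cx) : Rabs (snd z) <= Cnorm z.
Proof.
  unfold Cnorm. rewrite <- sqrt_Rsqr_abs. apply sqrt_le_1_alt.
  unfold Rsqr; simpl. nra.
Qed.

Lemma ray_linear_bound (g : Cx -> Cx) (a : Cx) : Cdifferentiable g a ->
  exists C d, 0 < d /\ 0 <= C /\ forall s, 0 < s < d ->
    Rabs (fst (g (Cadd a (s,0))) - fst (g a)) <= C * s /\
    Rabs (snd (g (Cadd a (s,0))) - snd (g a)) <= C * s.
Proof.
  intros [l Hl]. destruct (Hl 1 ltac:(lra)) as [d [Hd H]].
  exists (Rabs (fst l) + Rabs (snd l) + 1), d.
  pose proof (Rabs_pos (fst l)); pose proof (Rabs_pos (snd l)).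
  split; [lra|]. split; [lra|].
  intros s Hs. assert (Hn : Cnorm (s,0) = s) by (apply Cnorm_real; lra).
  assert (Hs' : 0 < Cnorm (s, 0) < d) by lra.
  specialize (H _ Hs'). rewrite Hn in H.
  pose proof (Cnorm_fst (Csub (Csub (g (Cadd a (s, 0))) (g a)) (Cmul l (s, 0)))) as F.
  pose proof (Cnorm_snd (Csub (Csub (g (Cadd a (s, 0))) (g a)) (Cmul l (s, 0)))) as S.
  set (err := Cnorm _) in F, S, H.
  unfold Csub, Cmul in F, S; simpl in F, S.
  assert (Rabs (fst l * s) = Rabs (fst l) * s) by (rewrite Rabs_mult, (Rabs_right s); lra).
  assert (Rabs (snd l * s) = Rabs (snd l) * s) by (rewrite Rabs_mult, (Rabs_right s); lra).
  split.
  - replace (fst (g (Cadd a (s,0))) - fst (g a))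
      with ((fst (g (Cadd a (s,0))) - fst (g a) - (fst l * s - snd l * 0)) + fst l * s) by ring.
    eapply Rle_trans; [apply Rabs_triang|]. nra.
  - replace (snd (g (Cadd a (s,0))) - snd (g a))
      with ((snd (g (Cadd a (s,0))) - snd (g a) - (fst l * 0 + snd l * s)) + snd l * s) by ring.
    eapply Rle_trans; [apply Rabs_triang|]. nra.
Qed.

Lemma vanish_of_linear_bound (x C d : R) : 0 < d -> 0 <= C ->
  (forall s, 0 < s < d -> Rabs x <= C * s) -> x = 0.
Proof.
  intros Hd HC H. destruct (Req_dec x 0) as [|Hx]; auto. exfalso.
  assert (Ha : 0 < Rabs x) by (apply Rabs_pos_lt; auto).
  set (s := Rmin (d/2) (Rabs x / (2 * (C + 1)))).
  assert (Hs1 : s <= d/2) by apply Rmin_l.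
  assert (Hs2 : s <= Rabs x / (2 * (C + 1))) by apply Rmin_r.
  assert (Hs0 : 0 < s) by (apply Rmin_pos; [lra|apply Rdiv_lt_0_compat; lra]).
  specialize (H s ltac:(lra)).
  assert ((C+1) * s <= Rabs x / 2).
  { apply Rmult_le_compat_l with (r := C+1) in Hs2; [|lra].
    replace ((C + 1) * (Rabs x / (2 * (C + 1)))) with (Rabs x / 2) in Hs2 by (field; lra). lra. }
  nra.
Qed.

Lemma power_factor_vanishes (u1 u2 : R -> R) (c1 c2 C1 C2 d : R) (k : nat) :
  (1 <= k)%nat -> 0 < d -> 0 <= C1 -> 0 <= C2 ->
  (forall s, 0 < s < d ->
     Rabs (u1 s - c1) <= C1 * s /\ Rabs (u2 s - c2) <= C2 * s /\ u2 s = s ^ k * u1 s) ->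
  c2 = 0.
Proof.
  intros Hk Hd HC1 HC2 H.
  apply (vanish_of_linear_bound c2 (Rabs c1 + C1 + C2) (Rmin 1 d));
    [apply Rmin_pos; lra | pose proof (Rabs_pos c1); lra |].
  intros s Hs. pose proof (Rmin_l 1 d). pose proof (Rmin_r 1 d).
  destruct (H s ltac:(lra)) as [B1 [B2 E]].
  assert (Hsk : 0 <= s ^ k <= s).
  { split; [apply pow_le; lra|]. replace k with (S (k - 1)) by lia. simpl.
    assert (s ^ (k-1) <= 1) by (rewrite <- (pow1 (k-1)); apply pow_incr; lra).
    assert (0 <= s ^ (k-1)) by (apply pow_le; lra). nra. }
  assert (Hu1 : Rabs (u1 s) <= Rabs c1 + C1).
  { replace (u1 s) with ((u1 s - c1) + c1) by ring.
    eapply Rle_trans; [apply Rabs_triang|]. nra. }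
  assert (Hu2 : Rabs (u2 s) <= s * (Rabs c1 + C1)).
  { rewrite E, Rabs_mult, (Rabs_right (s ^ k)) by lra.
    pose proof (Rabs_pos (u1 s)). nra. }
  replace c2 with (u2 s - (u2 s - c2)) by ring.
  eapply Rle_trans; [apply Rabs_triang|]. rewrite Rabs_Ropp. lra.
Qed.

Lemma zero_mult_le (f : Cx -> Cx) (a : Cx) (m1 m2 : nat) :
  zero_mult f a m1 -> zero_mult f a m2 -> (m1 <= m2)%nat.
Proof.
  intros [H1 [g1 [E1 [N1 F1]]]] [H2 [g2 [E2 [N2 F2]]]].
  destruct (le_lt_dec m1 m2) as [|Hlt]; auto. exfalso.
  destruct (ray_linear_bound g1 a (E1 a)) as [C1 [d1 [Hd1 [HC1 B1]]]].
  destruct (ray_linear_bound g2 a (E2 a)) as [C2 [d2 [Hd2 [HC2 B2]]]].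
  set (k := (m1 - m2)%nat).
  assert (Rel : forall s, 0 < s ->
             fst (g2 (Cadd a (s,0))) = s ^ k * fst (g1 (Cadd a (s,0))) /\
             snd (g2 (Cadd a (s,0))) = s ^ k * snd (g1 (Cadd a (s,0)))).
  { intros s Hs. pose proof (F1 (Cadd a (s,0))) as G. rewrite (F2 (Cadd a (s,0))) in G.
    rewrite Csub_shift, !Cpow_real in G. unfold Cmul in G; simpl in G.
    injection G; intros Ha Hb.
    assert (Hp : 0 < s ^ m2) by (apply pow_lt; lra).
    replace m1 with (k + m2)%nat in Ha, Hb by (unfold k; lia).
    rewrite pow_add in Ha, Hb.
    split; apply Rmult_eq_reg_l with (s ^ m2); nra. }
  apply N2. destruct (g2 a) as [u v] eqn:Eg. unfold C0.
  assert (Hd : 0 < Rmin d1 d2) by (apply Rmin_pos; lra).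
  pose proof (Rmin_l d1 d2); pose proof (Rmin_r d1 d2).
  f_equal.
  - apply (power_factor_vanishes (fun s => fst (g1 (Cadd a (s,0))))
             (fun s => fst (g2 (Cadd a (s,0)))) (fst (g1 a)) u C1 C2 (Rmin d1 d2) k);
      try (unfold k; lia); auto.
    intros s Hs. destruct (B1 s ltac:(lra)) as [P _]. destruct (B2 s ltac:(lra)) as [Q _].
    cbn [fst snd] in Q. repeat split; auto. apply Rel; lra.
  - apply (power_factor_vanishes (fun s => snd (g1 (Cadd a (s,0))))
             (fun s => snd (g2 (Cadd a (s,0)))) (snd (g1 a)) v C1 C2 (Rmin d1 d2) k);
      try (unfold k; lia); auto.
    intros s Hs. destruct (B1 s ltac:(lra)) as [_ P]. destruct (B2 s ltac:(lra)) as [_ Q].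
    cbn [fst snd] in Q. repeat split; auto. apply Rel; lra.
Qed.

Lemma sum_mult_app (l1 l2 : list (Cx * nat)) :
  sum_mult (l1 ++ l2) = (sum_mult l1 + sum_mult l2)%nat.
Proof. induction l1 as [|p l IH]; simpl; [reflexivity|]. rewrite IH; lia. Qed.

Lemma sum_mult_le (l : list (Cx * nat)) : forall l',
  NoDup (map fst l) ->
  (forall p, In p l -> exists m', In (fst p, m') l' /\ (snd p <= m')%nat) ->
  (sum_mult l <= sum_mult l')%nat.
Proof.
  induction l as [|p l IH]; intros l' ND H; simpl; [lia|].
  destruct (H p (or_introl eq_refl)) as [m' [Hin Hle]].
  apply in_split in Hin. destruct Hin as [la [lb ->]].
  inversion ND as [|x y Hnot ND']; subst.
  assert (IH' : (sum_mult l <= sum_mult (la ++ lb))%nat).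
  { apply IH; auto. intros q Hq. destruct (H q (or_intror Hq)) as [m'' [Hin' Hle']].
    exists m''. split; auto. apply in_app_or in Hin'. apply in_or_app.
    destruct Hin' as [|[E|]]; auto. exfalso. apply Hnot. injection E; intros _ E'.
    rewrite E'. apply in_map; auto. }
  rewrite sum_mult_app in *. simpl. lia.
Qed.

Lemma counting_nat (f : Cx -> Cx) (n : R -> R) : zero_counting f n ->
  forall r, 0 <= r -> exists k : nat, n r = INR k.
Proof. intros Z r Hr. destruct (Z r Hr) as [l [_ [_ [_ E]]]]. eauto. Qed.

Lemma counting_nonneg (f : Cx -> Cx) (n : R -> R) : zero_counting f n ->
  forall r, 0 <= r -> 0 <= n r.
Proof. intros Z r Hr. destruct (counting_nat f n Z r Hr) as [k ->]. apply pos_INR. Qed.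

Lemma counting_mono (f : Cx -> Cx) (n : R -> R) : zero_counting f n ->
  forall r r', 0 <= r -> r <= r' -> n r <= n r'.
Proof.
  intros Z r r' Hr Hrr.
  destruct (Z r Hr) as [l [ND [Hz [Hm E]]]].
  destruct (Z r' ltac:(lra)) as [l' [ND' [Hz' [Hm' E']]]].
  rewrite E, E'. apply le_INR. apply sum_mult_le; auto.
  intros p Hp. assert (Hf : In (fst p) (map fst l)) by (apply in_map; auto).
  apply Hz in Hf. destruct Hf as [Hf1 Hf2].
  assert (Hf' : In (fst p) (map fst l')) by (apply Hz'; split; auto; lra).
  apply in_map_iff in Hf'. destruct Hf' as [q [Eq Hq]].
  exists (snd q). split.
  - rewrite <- Eq. destruct q; auto.
  - apply (zero_mult_le f (fst p)); auto. rewrite <- Eq. auto.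
Qed.

Fixpoint sumlen (l : list (R * R)) : R :=
  match l with nil => 0 | cons iv l' => (snd iv - fst iv) + sumlen l' end.

Lemma sumlen_app l1 l2 : sumlen (l1 ++ l2) = sumlen l1 + sumlen l2.
Proof. induction l1; simpl; [ring|]. rewrite IHl1; ring. Qed.

Lemma sumlen_nonneg l : (forall iv, In iv l -> fst iv <= snd iv) -> 0 <= sumlen l.
Proof.
  induction l as [|iv l IH]; simpl; intros H; [lra|].
  pose proof (H iv (or_introl eq_refl)). assert (0 <= sumlen l) by (apply IH; auto). lra.
Qed.

Lemma finite_cover_length : forall N (l : list (R*R)), (length l <= N)%nat ->
  (forall iv, In iv l -> fst iv <= snd iv) -> forall p q, p <= q ->
  (forall x, p <= x <= q -> exists iv, In iv l /\ fst iv < x < snd iv) ->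
  q - p <= sumlen l.
Proof.
  induction N as [|N IH]; intros l Hlen Hwf p q Hpq Hcov.
  - destruct l; [|simpl in Hlen; lia].
    destruct (Hcov q ltac:(lra)) as [iv [[] _]].
  - destruct (Hcov q ltac:(lra)) as [[al be] [Hin [H1 H2]]]. simpl in H1, H2.
    apply in_split in Hin. destruct Hin as [l1 [l2 ->]].
    rewrite sumlen_app. simpl.
    assert (W1 : 0 <= sumlen l1)
      by (apply sumlen_nonneg; intros; apply Hwf; apply in_or_app; auto).
    assert (W2 : 0 <= sumlen l2)
      by (apply sumlen_nonneg; intros; apply Hwf; apply in_or_app; simpl; auto).
    destruct (Rlt_le_dec al p) as [Hap|Hpa]; [lra|].
    (* the interval containing [q] is removed; the rest covers [p, al] *)
    assert (IHa : al - p <= sumlen (l1 ++ l2)).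
    { apply (IH (l1 ++ l2)).
      - rewrite length_app in *. simpl in Hlen. lia.
      - intros iv Hiv. apply Hwf. apply in_app_or in Hiv. apply in_or_app. simpl. tauto.
      - lra.
      - intros x Hx. destruct (Hcov x ltac:(lra)) as [iv [Hiv Hx']].
        exists iv. split; auto. apply in_app_or in Hiv. apply in_or_app.
        destruct Hiv as [|[E|]]; auto. subst iv. simpl in Hx'. lra. }
    rewrite sumlen_app in IHa. lra.
Qed.

(* Compactness of [p, q] (via the least-upper-bound property): a property
   [C N y], monotone in [N], that holds near every point for some [N] holds on
   all of [p, q] for a single [N]. *)
Lemma segment_uniform_index (p q : R) (C : nat -> R -> Prop) :
  p <= q -> (forall N N' y, (N <= N')%nat -> C N y -> C N' y) ->
  (forall x, p <= x <= q -> exists N d, 0 < d /\ forall y, x - d < y < x + d -> C N y) ->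
  exists N, forall y, p <= y <= q -> C N y.
Proof.
  intros Hpq Hmon Hloc.
  set (E := fun x => p <= x <= q /\ exists N, forall y, p <= y <= x -> C N y).
  assert (Ep : E p).
  { split; [lra|]. destruct (Hloc p ltac:(lra)) as [N [d [Hd H]]].
    exists N. intros y Hy. apply H. lra. }
  assert (Eb : bound E) by (exists q; intros x [Hx _]; lra).
  destruct (completeness E Eb (ex_intro _ p Ep)) as [s [Hub Hlub]].
  assert (Hps : p <= s) by (apply Hub; auto).
  assert (Hsq : s <= q) by (apply Hlub; intros x [Hx _]; lra).
  destruct (Hloc s ltac:(lra)) as [N0 [d [Hd Hs]]].
  assert (Hx : exists x, E x /\ s - d < x).
  { apply NNPP; intro Hn.
    assert (s <= s - d); [|lra].
    apply Hlub. intros x Ex. apply Rnot_lt_le. intro Hlt. apply Hn; eauto. }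
  destruct Hx as [x [[Hx1 [N1 HN1]] Hxs]].
  (* the supremum can be pushed past [s] by [d/2] *)
  assert (Hz : forall z, p <= z <= q -> z <= s + d/2 -> E z).
  { intros z Hz Hzs. split; [lra|]. exists (Nat.max N0 N1). intros y Hy.
    destruct (Rle_dec y x).
    - apply (Hmon N1); [lia|]. apply HN1; lra.
    - apply (Hmon N0); [lia|]. apply Hs. split; [|lra].
      assert (x <= s) by (apply Hub; split; [lra|eauto]). lra. }
  destruct (Rle_dec q (s + d/2)).
  - destruct (Hz q ltac:(lra) ltac:(lra)) as [_ [N HN]]. exists N. exact HN.
  - assert (Ez : E (s + d/2)) by (apply Hz; lra).
    assert (s + d/2 <= s) by (apply Hub; auto). lra.
Qed.

Fixpoint psum (F : nat -> R) (N : nat) : R :=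
  match N with O => 0 | S N' => psum F N' + F N' end.

Lemma psum_sum F N : psum F (S N) = sum_f_R0 F N.
Proof. induction N; simpl in *; [ring|]. rewrite <- IHN. ring. Qed.

Lemma psum_mono F N j : (forall k, 0 <= F k) -> psum F N <= psum F (N + j).
Proof.
  intros HF. induction j; [rewrite Nat.add_0_r; lra|].
  rewrite Nat.add_succ_r. simpl. pose proof (HF (N + j)%nat). lra.
Qed.

Lemma psum_le_lim F L : (forall k, 0 <= F k) -> infinite_sum F L -> forall N, psum F N <= L.
Proof.
  intros HF Hs N. apply Rnot_lt_le. intro Hlt.
  destruct (Hs (psum F N - L) ltac:(lra)) as [N0 HN0].
  specialize (HN0 (Nat.max N0 N) ltac:(lia)). rewrite <- psum_sum in HN0.
  assert (psum F N <= psum F (S (Nat.max N0 N))).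
  { replace (S (Nat.max N0 N)) with (N + (S (Nat.max N0 N) - N))%nat by lia.
    apply psum_mono; auto. }
  unfold Rdist in HN0. rewrite Rabs_right in HN0; lra.
Qed.

Lemma psum_plus F G N : psum (fun k => F k + G k) N = psum F N + psum G N.
Proof. induction N; simpl; [ring|]. rewrite IHN; ring. Qed.

Lemma psum_ext F G N : (forall k, F k = G k) -> psum F N = psum G N.
Proof. intros H; induction N; simpl; [auto|]. rewrite IHN, H; auto. Qed.

Lemma psum_scal c F N : psum (fun k => c * F k) N = c * psum F N.
Proof. induction N; simpl; [ring|]. rewrite IHN; ring. Qed.

Lemma psum_geom N : psum (fun k => (/2) ^ k) N = 2 - 2 * (/2) ^ N.
Proof. induction N; simpl; [field|]. rewrite IHN. field. Qed.

Lemma sumlen_seq (al be : nat -> R) N :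
  sumlen (map (fun k => (al k, be k)) (seq 0 N)) = psum (fun k => be k - al k) N.
Proof.
  induction N; [reflexivity|]. rewrite seq_S, map_app, sumlen_app, IHN. simpl. ring.
Qed.

Lemma sumlen_enlarge (ls : list (R*R)) eta :
  sumlen (map (fun iv => (fst iv - eta, snd iv + eta)) ls)
  = sumlen ls + 2 * eta * INR (length ls).
Proof.
  induction ls as [|iv ls IH]; [simpl; ring|].
  cbn [map sumlen length]. rewrite IH, S_INR. simpl. ring.
Qed.

Lemma enlarged_length (ls : list (R*R)) (a b : nat -> R) (L eps : R) (N : nat) :
  0 < eps -> (forall k, a k <= b k) -> infinite_sum (fun k => b k - a k) L ->
  let eta := eps / (4 * (INR (length ls) + 1)) in
  let e := fun k => eps / 8 * (/2) ^ k in
  sumlen (map (fun iv => (fst iv - eta, snd iv + eta)) ls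
          ++ map (fun k => (a k - e k, b k + e k)) (seq 0 N))
  <= sumlen ls + L + eps.
Proof.
  intros Heps Hab Hs eta e.
  rewrite sumlen_app, sumlen_enlarge, sumlen_seq.
  rewrite (psum_ext _ (fun k => (b k - a k) + eps / 4 * (/2) ^ k)) by (intro k; unfold e; field).
  rewrite psum_plus.
  assert (P1 : psum (fun k => b k - a k) N <= L)
    by (apply psum_le_lim; auto; intro k; pose proof (Hab k); lra).
  assert (P2 : psum (fun k => eps / 4 * (/ 2) ^ k) N <= eps / 2).
  { rewrite psum_scal, psum_geom. pose proof (pow_lt (/2) N ltac:(lra)). nra. }
  assert (P3 : 2 * eta * INR (length ls) <= eps / 2).
  { pose proof (pos_INR (length ls)).
    replace (2 * eta * INR (length ls))
      with (eps / 2 * (INR (length ls) / (INR (length ls) + 1))) by (unfold eta; field; lra).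
    assert (INR (length ls) / (INR (length ls) + 1) <= 1).
    { apply Rmult_le_reg_r with (INR (length ls) + 1); [lra|].
      unfold Rdiv; rewrite Rmult_assoc, Rinv_l; lra. }
    nra. }
  lra.
Qed.

(* The slightly enlarged intervals are open; compactness extracts a finite
   subcover, to which finite subadditivity applies. *)
Lemma cover_length p q (ls : list (R*R)) (a b : nat -> R) L :
  p <= q -> (forall iv, In iv ls -> fst iv <= snd iv) -> (forall k, a k <= b k) ->
  infinite_sum (fun k => b k - a k) L ->
  (forall x, p <= x <= q ->
     (exists iv, In iv ls /\ fst iv <= x <= snd iv) \/ (exists k, a k <= x <= b k)) ->
  q - p <= sumlen ls + L.
Proof.
  intros Hpq Hwf Hab Hs Hcov. apply Rle_plus_epsilon. intros eps Heps.
  pose proof (enlarged_length ls a b L eps) as Hlen. cbv zeta in Hlen.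
  set (eta := eps / (4 * (INR (length ls) + 1))) in Hlen.
  set (e := fun k => eps / 8 * (/2) ^ k) in Hlen.
  assert (Heta : 0 < eta)
    by (unfold eta; apply Rdiv_lt_0_compat; [lra|]; pose proof (pos_INR (length ls)); lra).
  assert (He : forall k, 0 < e k)
    by (intro k; unfold e; apply Rmult_lt_0_compat; [lra|apply pow_lt; lra]).
  set (lsE := map (fun iv => (fst iv - eta, snd iv + eta)) ls) in Hlen.
  set (sq := fun N => map (fun k => (a k - e k, b k + e k)) (seq 0 N)).
  set (C := fun N y => exists iv, In iv (lsE ++ sq N) /\ fst iv < y < snd iv).
  destruct (segment_uniform_index p q C Hpq) as [N HN].
  - intros N N' y HNN [iv [Hin Hy]]. exists iv. split; auto.
    apply in_app_or in Hin. apply in_or_app. destruct Hin as [|Hin]; [auto|right].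
    unfold sq in *. apply in_map_iff in Hin. destruct Hin as [k [Ek Hk]].
    apply in_seq in Hk. apply in_map_iff. exists k. split; auto. apply in_seq. lia.
  - intros x Hx. destruct (Hcov x Hx) as [[iv [Hin Hiv]]|[k Hk]].
    + exists O, eta. split; auto. intros y Hy. exists (fst iv - eta, snd iv + eta).
      split; [apply in_or_app; left; unfold lsE; apply in_map_iff; eauto|]. simpl. lra.
    + exists (S k), (e k). split; auto. intros y Hy. exists (a k - e k, b k + e k).
      split; [|simpl; lra]. apply in_or_app; right. unfold sq. apply in_map_iff.
      exists k. split; auto. apply in_seq. lia.
  - assert (q - p <= sumlen (lsE ++ sq N)); [|specialize (Hlen N Heps Hab Hs); unfold sq in *; lra].
    apply (finite_cover_length (length (lsE ++ sq N))); auto.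
    intros iv Hiv. apply in_app_or in Hiv. destruct Hiv as [Hiv|Hiv].
    + unfold lsE in Hiv. apply in_map_iff in Hiv. destruct Hiv as [iv' [<- Hiv']].
      simpl. pose proof (Hwf iv' Hiv'). lra.
    + unfold sq in Hiv. apply in_map_iff in Hiv. destruct Hiv as [k [<- _]].
      simpl. pose proof (Hab k). pose proof (He k). lra.
Qed.

Definition indicator (P : Prop) : R := if excluded_middle_informative P then 1 else 0.

Lemma indicator_bounds (P : Prop) : 0 <= indicator P <= 1.
Proof. unfold indicator; destruct excluded_middle_informative; lra. Qed.

Lemma indicator_true (P : Prop) : P -> indicator P = 1.
Proof. unfold indicator; destruct excluded_middle_informative; tauto. Qed.

Lemma indicator_false (P : Prop) : ~ P -> indicator P = 0.
Proof. unfold indicator; destruct excluded_middle_informative; tauto. Qed.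

Fixpoint count (b : nat -> R) (lo len : nat) : R :=
  match len with O => 0 | S l => b lo + count b (S lo) l end.

Lemma count_add b : forall x lo y, count b lo (x + y) = count b lo x + count b (lo + x) y.
Proof.
  induction x as [|x IH]; intros lo y; simpl.
  - rewrite Nat.add_0_r; ring.
  - rewrite IH. replace (S lo + x)%nat with (lo + S x)%nat by lia. ring.
Qed.

Lemma count_indicator_le (P : nat -> Prop) : forall len lo,
  count (fun j => indicator (P j)) lo len <= INR len.
Proof.
  induction len as [|len IH]; intro lo; simpl count; [simpl; lra|].
  rewrite S_INR. pose proof (IH (S lo)). pose proof (indicator_bounds (P lo)). lra.
Qed.

Definition right_bad (phi : nat -> R) (rho : R) (M j : nat) : Prop :=
  exists k, (j <= k < M)%nat /\ rho * (INR k + 1 - INR j) < phi (S k) - phi j.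

Definition left_bad (phi : nat -> R) (rho : R) (j : nat) : Prop :=
  exists k, (k <= j)%nat /\ rho * (INR j + 1 - INR k) < phi (S j) - phi k.

(* Bad cells are greedily grouped into
   disjoint blocks, each carrying an increase larger than [rho] per cell. *)
Lemma right_bad_count (phi : nat -> R) (rho : R) (M : nat) : 0 < rho ->
  (forall j, (j < M)%nat -> phi j <= phi (S j)) ->
  rho * count (fun j => indicator (right_bad phi rho M j)) 0 M <= phi M - phi O.
Proof.
  intros Hr Hphi. set (b := fun j => indicator (right_bad phi rho M j)).
  assert (G : forall len lo, (lo + len = M)%nat -> rho * count b lo len <= phi M - phi lo).
  { intro len. induction len as [len IH] using (well_founded_induction lt_wf).
    intros lo Hl. destruct len as [|len'].
    - simpl. replace lo with M by lia. lra.
    - destruct (classic (right_bad phi rho M lo)) as [[k [Hk Hlt]]|NB].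
      +
        replace (S len') with ((S k - lo) + (M - S k))%nat by lia.
        rewrite count_add. replace (lo + (S k - lo))%nat with (S k) by lia.
        specialize (IH (M - S k)%nat ltac:(lia) (S k) ltac:(lia)).
        pose proof (count_indicator_le (right_bad phi rho M) (S k - lo) lo) as C1.
        rewrite minus_INR, S_INR in C1 by lia.
        assert (rho * count b lo (S k - lo) <= rho * (INR k + 1 - INR lo))
          by (apply Rmult_le_compat_l; unfold b; lra).
        lra.
      + simpl count. unfold b at 1. rewrite (indicator_false _ NB).
        specialize (IH len' ltac:(lia) (S lo) ltac:(lia)).
        pose proof (Hphi lo ltac:(lia)). lra. }
  apply (G M O). lia.
Qed.

Lemma left_bad_count (phi : nat -> R) (rho : R) (M : nat) : 0 < rho ->
  (forall j, (j < M)%nat -> phi j <= phi (S j)) ->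
  rho * count (fun j => indicator (left_bad phi rho j)) 0 M <= phi M - phi O.
Proof.
  intros Hr Hphi. set (b := fun j => indicator (left_bad phi rho j)).
  assert (G : forall hi, (hi <= M)%nat -> rho * count b 0 hi <= phi hi - phi O).
  { intro hi. induction hi as [hi IH] using (well_founded_induction lt_wf).
    intros Hh. destruct hi as [|j].
    - simpl. lra.
    - destruct (classic (left_bad phi rho j)) as [[k [Hk Hlt]]|NB].
      +
        replace (S j) with (k + (S j - k))%nat by lia.
        rewrite count_add. replace (k + (S j - k))%nat with (S j) by lia.
        rewrite Nat.add_0_l.
        specialize (IH k ltac:(lia) ltac:(lia)).
        pose proof (count_indicator_le (left_bad phi rho) (S j - k) k) as C1.
        rewrite minus_INR, S_INR in C1 by lia.
        assert (rho * count b k (S j - k) <= rho * (INR j + 1 - INR k))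
          by (apply Rmult_le_compat_l; unfold b; lra).
        lra.
      + replace (S j) with (j + 1)%nat by lia. rewrite count_add. simpl count.
        unfold b at 2. rewrite (indicator_false _ NB).
        specialize (IH j ltac:(lia) ltac:(lia)).
        pose proof (Hphi j ltac:(lia)). replace (j+1)%nat with (S j) by lia. lra. }
  apply G; lia.
Qed.

Lemma bad_cells_length (phi : nat -> R) (lam h D : R) (M : nat) : 0 < lam -> 0 < h ->
  (forall j, (j < M)%nat -> phi j <= phi (S j)) -> phi M - phi O <= D ->
  h * count (fun j => indicator (right_bad phi (lam * h / 3) M j)) 0 M
  + h * count (fun j => indicator (left_bad phi (lam * h / 3) j)) 0 M <= 6 * D / lam.
Proof.
  intros Hlam Hh Hphi HD.
  assert (Hrho : 0 < lam * h / 3) by nra.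
  pose proof (right_bad_count phi (lam * h / 3) M Hrho Hphi).
  pose proof (left_bad_count phi (lam * h / 3) M Hrho Hphi).
  apply Rmult_le_reg_l with (lam / 3); [lra|].
  replace (lam / 3 * (6 * D / lam)) with (2 * D) by (field; lra).
  lra.
Qed.

Lemma sumlen_cells (x : nat -> R) (h : R) (b : nat -> R) : forall len lo,
  sumlen (map (fun j => (x j, x j + h * b j)) (seq lo len)) = h * count b lo len.
Proof.
  induction len as [|len IH]; intros lo; simpl; [ring|]. rewrite IH. ring.
Qed.

Lemma find_cell (x : nat -> R) : forall hi lo t, (lo < hi)%nat -> x lo <= t <= x hi ->
  exists k, (lo <= k < hi)%nat /\ x k <= t <= x (S k).
Proof.
  induction hi as [|h IH]; intros lo t Hl Ht; [lia|].
  destruct (Nat.eq_dec lo h) as [->|Hne].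
  - exists h; split; [lia|lra].
  - destruct (Rle_dec t (x h)).
    + destruct (IH lo t ltac:(lia) ltac:(lra)) as [k [Hk Hk']]. exists k; split; [lia|auto].
    + exists h; split; [lia|lra].
Qed.

Lemma nat_gap (u v : R) : (exists p, u = INR p) -> (exists q, v = INR q) -> u - v < 1 -> u <= v.
Proof.
  intros [p ->] [q ->] H. destruct (le_lt_dec p q) as [Hle|Hlt].
  - apply le_INR; auto.
  - apply le_INR in Hlt. rewrite S_INR in Hlt. lra.
Qed.

Lemma nat_unbounded (X : R) : exists k : nat, X < INR k.
Proof.
  destruct (archimed X) as [H1 _].
  destruct (Z_lt_le_dec (up X) 0) as [Hn|Hp].
  - exists O. simpl. apply IZR_lt in Hn. lra.
  - exists (Z.to_nat (up X)). rewrite INR_IZR_INZ, Z2Nat.id by lia. lra.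
Qed.

Lemma pow2_gt (j : nat) : INR j < 2 ^ j.
Proof.
  induction j; [simpl; lra|]. rewrite S_INR. simpl pow.
  pose proof (pow_R1_Rle 2 j ltac:(lra)). lra.
Qed.

Lemma pow_inv_mul (t r : R) (m : nat) : 0 < t -> 0 < r -> (t / r) ^ m * (r / t) ^ m = 1.
Proof.
  intros Ht Hr. rewrite <- Rpow_mult_distr.
  replace (t / r * (r / t)) with 1 by (field; lra). apply pow1.
Qed.

Lemma ratio_ge (t r c : R) : 0 < r -> c * r <= t -> c <= t / r.
Proof.
  intros Hr H. apply Rmult_le_reg_r with r; [lra|].
  unfold Rdiv. rewrite Rmult_assoc, Rinv_l; lra.
Qed.

Lemma power_absorbs_constant (y K : R) (nu m : nat) : 2 <= y -> K <= 2 ^ nu ->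
  (2 * nu <= m)%nat -> K * y ^ nu <= y ^ m.
Proof.
  intros Hy HK Hm.
  apply Rle_trans with (y ^ (nu + nu)).
  - rewrite pow_add. assert (2 ^ nu <= y ^ nu) by (apply pow_incr; lra).
    assert (0 < y ^ nu) by (apply pow_lt; lra). nra.
  - apply Rle_pow; [lra|lia].
Qed.

(* A linear (slope) bound on an increase gives a power bound, by Bernoulli:
   if [v - u <= lam (t - r)] and [lam r <= m u], then [v <= (t/r)^m u]. *)
Lemma slope_power_bound (r t u v lam : R) (m : nat) :
  0 < r <= t -> 0 <= u -> v - u <= lam * (t - r) -> lam * r <= INR m * u ->
  v <= (t / r) ^ m * u.
Proof.
  intros Hrt Hu Hv Hlam.
  assert (Hq : 1 <= t / r) by (apply ratio_ge; lra).
  assert (Bern : 1 + INR m * (t / r - 1) <= (t / r) ^ m).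
  { destruct (Req_dec (t / r - 1) 0) as [E|E].
    - replace (t / r) with 1 by lra. rewrite pow1. lra.
    - replace (t / r) with (1 + (t / r - 1)) at 2 by ring. apply poly. lra. }
  assert (E : INR m * (t / r - 1) * u = INR m * u / r * (t - r)) by (field; lra).
  assert (lam <= INR m * u / r).
  { apply Rmult_le_reg_r with r; [lra|]. unfold Rdiv. rewrite Rmult_assoc, Rinv_l; lra. }
  assert (lam * (t - r) <= INR m * u / r * (t - r)) by (apply Rmult_le_compat_r; lra).
  assert ((1 + INR m * (t / r - 1)) * u <= (t / r) ^ m * u) by (apply Rmult_le_compat_r; lra).
  nra.
Qed.

Lemma power_bound_swap (t r u v : R) (m : nat) : 0 < t -> 0 < r ->
  v <= (r / t) ^ m * u -> (t / r) ^ m * v <= u.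
Proof.
  intros Ht Hr H.
  assert (0 <= (t / r) ^ m) by (apply pow_le; apply Rlt_le, Rdiv_lt_0_compat; lra).
  apply Rle_trans with ((t / r) ^ m * ((r / t) ^ m * u)); [apply Rmult_le_compat_l; lra|].
  rewrite <- Rmult_assoc, pow_inv_mul by lra. lra.
Qed.

Definition grid (x0 h : R) (i : nat) : R := x0 + INR i * h.

Lemma grid_S (x0 h : R) (i : nat) : grid x0 h (S i) = grid x0 h i + h.
Proof. unfold grid. rewrite S_INR. ring. Qed.

Lemma fine_grid (RR lam : R) : 0 < RR -> 0 < lam ->
  exists (M : nat) (h : R), (0 < M)%nat /\ 0 < h /\ lam * h <= 1 /\
    grid (RR / 2) h M = 4 * RR.
Proof.
  intros HR Hlam. destruct (nat_unbounded (7 * RR * lam / 2)) as [M HM].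
  assert (HMpos : 0 < INR M) by nra.
  exists M, (7 * RR / (2 * INR M)). repeat split.
  - destruct M; [simpl in HMpos; lra|lia].
  - apply Rdiv_lt_0_compat; lra.
  - replace (lam * (7 * RR / (2 * INR M))) with ((7 * RR * lam / 2) / INR M) by (field; lra).
    apply Rmult_le_reg_r with (INR M); [lra|]. unfold Rdiv at 1. rewrite Rmult_assoc, Rinv_l; lra.
  - unfold grid. field. lra.
Qed.

Lemma block_slope (lam h dk D : R) : 0 <= lam -> 0 < h -> 2 <= dk -> (dk - 1) * h <= D ->
  lam * h / 3 * (dk + 1) <= lam * D.
Proof.
  intros Hl Hh Hdk HD.
  assert (lam * h / 3 * (dk + 1) <= lam * ((dk - 1) * h)).
  { assert (0 <= lam * h * (2 * dk - 4)) by (apply Rmult_le_pos; nra). nra. }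
  assert (lam * ((dk - 1) * h) <= lam * D) by (apply Rmult_le_compat_l; lra).
  lra.
Qed.

Section CountingFunction.

Variables (n : R -> R) (r0 K : R).
Hypothesis n_nonneg : forall r, 0 <= r -> 0 <= n r.
Hypothesis n_mono : forall r r', 0 <= r -> r <= r' -> n r <= n r'.
Hypothesis n_nat : forall r, 0 <= r -> exists k : nat, n r = INR k.
Hypothesis r0_pos : 0 < r0.
Hypothesis K_gt1 : 1 < K.
Hypothesis n_doubling : forall r, r0 <= r -> n (2 * r) <= K * n r.

Lemma doubling_power (nu : nat) : K <= 2 ^ nu ->
  forall r t, r0 <= r -> r <= t -> n t <= K * (t / r) ^ nu * n r.
Proof.
  intros Hnu r t Hr Hrt.
  pose proof (n_nonneg r ltac:(lra)) as Hnr.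
  assert (G : forall j t, r <= t <= 2 ^ j * r -> n t <= K * (t / r) ^ nu * n r).
  { induction j as [|j IH]; intros t' Ht'.
    - simpl in Ht'. replace t' with r by lra. replace (r / r) with 1 by (field; lra).
      rewrite pow1. nra.
    - assert (Hy : 1 <= (t' / r) ^ nu) by (apply pow_R1_Rle, ratio_ge; lra).
      destruct (Rle_dec t' (2 * r)).
      + apply Rle_trans with (n (2 * r)); [apply n_mono; lra|].
        apply Rle_trans with (K * n r); [apply n_doubling; lra|].
        assert (0 <= K * n r * ((t' / r) ^ nu - 1)) by (apply Rmult_le_pos; nra). nra.
      + simpl in Ht'.
        assert (IH' := IH (t'/2) ltac:(split; lra)).
        replace t' with (2 * (t'/2)) by field.
        apply Rle_trans with (K * n (t'/2)); [apply n_doubling; lra|].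
        replace ((2 * (t'/2)) / r) with (2 * (t'/2/r)) by (field; lra).
        rewrite Rpow_mult_distr.
        assert (0 <= (t'/2/r)^nu) by (apply pow_le, Rlt_le, Rdiv_lt_0_compat; lra).
        apply Rle_trans with (K * (K * (t' / 2 / r) ^ nu * n r)); [apply Rmult_le_compat_l; lra|].
        assert (K * ((t' / 2 / r) ^ nu * n r) <= 2 ^ nu * ((t' / 2 / r) ^ nu * n r))
          by (apply Rmult_le_compat_r; nra).
        nra. }
  destruct (nat_unbounded (t / r)) as [j Hj].
  apply (G j). split; auto. pose proof (pow2_gt j).
  assert (t / r * r = t) by (field; lra).
  assert (t / r <= 2 ^ j) by lra.
  apply Rmult_le_compat_r with (r := r) in H1; lra.
Qed.

(* Membership in [F_set] only has to be checked on [[r/2, 2r]] once the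
   exponent dominates the doubling exponent: further away, doubling wins. *)
Lemma F_set_of_local (nu m : nat) (r : R) :
  K <= 2 ^ nu -> (2 * nu <= m)%nat -> 2 * r0 <= r ->
  (forall t, r <= t <= 2 * r -> n t <= (t / r) ^ m * n r) ->
  (forall t, r / 2 <= t <= r -> (t / r) ^ m * n r <= n t) ->
  F_set n r0 (INR m) r.
Proof.
  intros Hnu Hm Hr NR NL.
  split; [lra|split].
  - intros t Ht. rewrite Rpower_pow by (apply Rdiv_lt_0_compat; lra).
    destruct (Rle_dec t (2 * r)); [apply NR; lra|].
    pose proof (doubling_power nu Hnu r t ltac:(lra) ltac:(lra)).
    pose proof (power_absorbs_constant (t/r) K nu m ltac:(apply ratio_ge; lra) Hnu Hm).
    pose proof (n_nonneg r ltac:(lra)).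
    assert (K * (t / r) ^ nu * n r <= (t / r) ^ m * n r) by (apply Rmult_le_compat_r; lra).
    lra.
  - intros t Ht. rewrite Rpower_pow by (apply Rdiv_lt_0_compat; lra).
    destruct (Rle_dec (r / 2) t); [apply NL; lra|].
    apply power_bound_swap; try lra.
    pose proof (doubling_power nu Hnu t r ltac:(lra) ltac:(lra)).
    pose proof (power_absorbs_constant (r/t) K nu m ltac:(apply ratio_ge; lra) Hnu Hm).
    pose proof (n_nonneg t ltac:(lra)).
    assert (K * (r / t) ^ nu * n t <= (r / t) ^ m * n t) by (apply Rmult_le_compat_r; lra).
    lra.
Qed.

(* For a block of at least
   three cells this is the definition; for shorter blocks the increase is below
   [1], hence zero since [n] is natural-valued. *)
Lemma right_cell_slope (x0 h lam : R) (M j : nat) (r t : R) :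
  0 <= x0 -> 0 < h -> 0 <= lam -> lam * h <= 1 ->
  ~ right_bad (fun i => n (grid x0 h i)) (lam * h / 3) M j -> (j < M)%nat ->
  grid x0 h j <= r <= grid x0 h (S j) -> r <= t <= grid x0 h M ->
  n t - n r <= lam * (t - r).
Proof.
  intros Hx0 Hh Hlam Hlh NB Hj Hr Ht.
  assert (Hg : forall i, 0 <= grid x0 h i) by (intro i; unfold grid; pose proof (pos_INR i); nra).
  pose proof (Hg j) as Hgj.
  destruct (find_cell (grid x0 h) M j t Hj ltac:(lra)) as [k [Hk [Hk1 Hk2]]].
  assert (P1 : n t <= n (grid x0 h (S k))) by (apply n_mono; lra).
  assert (P2 : n (grid x0 h j) <= n r) by (apply n_mono; auto; lra).
  assert (P3 : n (grid x0 h (S k)) - n (grid x0 h j) <= lam * h / 3 * (INR k + 1 - INR j)).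
  { apply Rnot_lt_le. intro Hlt. apply NB. exists k. split; auto. }
  assert (Hkj : INR j <= INR k) by (apply le_INR; lia).
  destruct (le_lt_dec (j + 2) k) as [Hfar|Hnear].
  - assert (2 <= INR k - INR j)
      by (apply le_INR in Hfar; rewrite plus_INR in Hfar; simpl in Hfar; lra).
    assert (lam * h / 3 * (INR k - INR j + 1) <= lam * (t - r)).
    { apply block_slope; auto. rewrite grid_S in Hr. unfold grid in Hr, Hk1. nra. }
    lra.
  - assert (INR k <= INR j + 1)
      by (assert (HH : (k <= S j)%nat) by lia; apply le_INR in HH; rewrite S_INR in HH; lra).
    assert (n (grid x0 h (S k)) <= n (grid x0 h j)) by (apply nat_gap; auto; nra).
    nra.
Qed.

Lemma left_cell_slope (x0 h lam : R) (j : nat) (r t : R) :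
  0 <= x0 -> 0 < h -> 0 <= lam -> lam * h <= 1 ->
  ~ left_bad (fun i => n (grid x0 h i)) (lam * h / 3) j ->
  grid x0 h j <= r <= grid x0 h (S j) -> x0 <= t <= r ->
  n r - n t <= lam * (r - t).
Proof.
  intros Hx0 Hh Hlam Hlh NB Hr Ht.
  assert (Hg : forall i, 0 <= grid x0 h i) by (intro i; unfold grid; pose proof (pos_INR i); nra).
  assert (Hg0 : grid x0 h 0 = x0) by (unfold grid; simpl; ring).
  destruct (find_cell (grid x0 h) (S j) O t ltac:(lia) ltac:(lra)) as [k [Hk [Hk1 Hk2]]].
  assert (P1 : n (grid x0 h k) <= n t) by (apply n_mono; auto).
  assert (P2 : n r <= n (grid x0 h (S j))) by (apply n_mono; lra).
  assert (P3 : n (grid x0 h (S j)) - n (grid x0 h k) <= lam * h / 3 * (INR j + 1 - INR k)).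
  { apply Rnot_lt_le. intro Hlt. apply NB. exists k. split; [lia|auto]. }
  assert (Hkj : INR k <= INR j) by (apply le_INR; lia).
  destruct (le_lt_dec (k + 2) j) as [Hfar|Hnear].
  - assert (2 <= INR j - INR k)
      by (apply le_INR in Hfar; rewrite plus_INR in Hfar; simpl in Hfar; lra).
    assert (lam * h / 3 * (INR j - INR k + 1) <= lam * (r - t)).
    { apply block_slope; auto. rewrite grid_S in Hk2. unfold grid in Hk2, Hr. nra. }
    lra.
  - assert (INR j <= INR k + 1)
      by (assert (HH : (j <= S k)%nat) by lia; apply le_INR in HH; rewrite S_INR in HH; lra).
    assert (n (grid x0 h (S j)) <= n (grid x0 h k)) by (apply nat_gap; auto; nra).
    nra.
Qed.

Lemma n_quadruple (RR : R) : r0 <= RR -> n (4 * RR) <= K * K * n RR.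
Proof.
  intros HR. replace (4 * RR) with (2 * (2 * RR)) by ring.
  apply Rle_trans with (K * n (2 * RR)); [apply n_doubling; lra|].
  rewrite Rmult_assoc. apply Rmult_le_compat_l; [lra|]. apply n_doubling; lra.
Qed.

(* Every point of [[R, 2R]] lying in a cell of the grid [R/2 = x_0 < ... < x_M = 4R]
   that is neither right-bad nor left-bad belongs to [F_set] with exponent [m]:
   the slope bounds on both sides turn into power bounds on [[r/2, 2r]]. *)
Lemma good_cell (nu m M j : nat) (RR h lam r : R) :
  K <= 2 ^ nu -> (2 * nu <= m)%nat -> 2 * r0 <= RR -> 0 < h ->
  grid (RR / 2) h M = 4 * RR -> 0 <= lam -> lam * h <= 1 ->
  lam * (2 * RR) <= INR m * n RR / K ->
  ~ right_bad (fun i => n (grid (RR / 2) h i)) (lam * h / 3) M j ->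
  ~ left_bad (fun i => n (grid (RR / 2) h i)) (lam * h / 3) j -> (j < M)%nat ->
  grid (RR / 2) h j <= r <= grid (RR / 2) h (S j) -> RR <= r <= 2 * RR ->
  F_set n r0 (INR m) r.
Proof.
  intros Hnu Hm HR Hh HxM Hlam Hlh Hbudget NBR NBL Hj Hcell Hr.
  pose proof (pos_INR m) as Hm0.
  pose proof (n_nonneg RR ltac:(lra)) as HA.
  assert (Hadm : forall s, 0 <= s <= 2 * RR -> n RR / K <= n s -> lam * s <= INR m * n s).
  { intros s Hs Hns.
    assert (lam * s <= lam * (2 * RR)) by (apply Rmult_le_compat_l; lra).
    assert (INR m * n RR / K <= INR m * n s).
    { unfold Rdiv. rewrite Rmult_assoc. apply Rmult_le_compat_l; [lra|exact Hns]. }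
    lra. }
  assert (HAK : n RR / K <= n RR).
  { unfold Rdiv. rewrite <- (Rmult_1_r (n RR)) at 2.
    apply Rmult_le_compat_l; [lra|]. rewrite <- Rinv_1. apply Rinv_le_contravar; lra. }
  assert (HRhalf : n RR / K <= n (RR / 2)).
  { apply Rmult_le_reg_l with K; [lra|]. unfold Rdiv.
    rewrite <- Rmult_assoc, (Rmult_comm K (n RR)), Rmult_assoc, Rinv_r, Rmult_1_r by lra.
    replace RR with (2 * (RR / 2)) at 1 by field. apply n_doubling; lra. }
  apply (F_set_of_local nu m r); auto; [lra| |].
  - intros t Ht. apply (slope_power_bound r t (n r) (n t) lam m); [lra|apply n_nonneg; lra| |].
    + apply (right_cell_slope (RR / 2) h lam M j); auto; lra.
    + apply Hadm; [lra|]. apply Rle_trans with (n RR); auto. apply n_mono; lra.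
  - intros t Ht. apply power_bound_swap; [lra|lra|].
    apply (slope_power_bound t r (n t) (n r) lam m); [lra|apply n_nonneg; lra| |].
    + apply (left_cell_slope (RR / 2) h lam j); auto; lra.
    + apply Hadm; [lra|]. apply Rle_trans with (n (RR / 2)); auto. apply n_mono; lra.
Qed.

Lemma grid_point_classified (nu m M : nat) (RR h lam r : R) :
  K <= 2 ^ nu -> (2 * nu <= m)%nat -> 2 * r0 <= RR -> (0 < M)%nat -> 0 < h ->
  grid (RR / 2) h M = 4 * RR -> 0 <= lam -> lam * h <= 1 ->
  lam * (2 * RR) <= INR m * n RR / K -> RR <= r <= 2 * RR ->
  let phi := fun i => n (grid (RR / 2) h i) in
  (exists j, In j (seq 0 M) /\ grid (RR / 2) h j <= r <=
     grid (RR / 2) h j + h * indicator (right_bad phi (lam * h / 3) M j)) \/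
  (exists j, In j (seq 0 M) /\ grid (RR / 2) h j <= r <=
     grid (RR / 2) h j + h * indicator (left_bad phi (lam * h / 3) j)) \/
  F_set n r0 (INR m) r.
Proof.
  intros Hnu Hm HR HM Hh HxM Hlam Hlh Hbudget Hr phi.
  assert (Hx0 : grid (RR / 2) h O = RR / 2) by (unfold grid; simpl; ring).
  destruct (find_cell (grid (RR / 2) h) M O r HM ltac:(lra)) as [j [Hj Hcell]].
  assert (Hjin : In j (seq 0 M)) by (apply in_seq; lia).
  rewrite grid_S in Hcell.
  destruct (classic (right_bad phi (lam * h / 3) M j)) as [BR|NBR].
  { left. exists j. rewrite indicator_true by exact BR. split; [auto|lra]. }
  destruct (classic (left_bad phi (lam * h / 3) j)) as [BL|NBL].
  { right; left. exists j. rewrite indicator_true by exact BL. split; [auto|lra]. }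
  right; right. apply (good_cell nu m M j RR h lam r); auto; [lia|rewrite grid_S; lra].
Qed.

(* With slope [lam = m n(R) / (2 K R)] and a grid
   of mesh [h <= 1 / lam] on [[R/2, 4R]], the bad cells have total length at most
   [6 K^2 n(R) / lam = 12 K^3 R / m <= delta R]; all other points are good. *)
Lemma meas_ge_positive (nu m : nat) (RR delta : R) :
  K <= 2 ^ nu -> (2 * nu <= m)%nat -> 12 * K ^ 3 <= delta * INR m ->
  2 * r0 <= RR -> 0 < n RR ->
  meas_ge (fun r => F_set n r0 (INR m) r /\ RR <= r <= 2 * RR) ((1 - delta) * RR).
Proof.
  intros Hnu Hm Hdm HR HA a b Hab Hcov L HL.
  assert (HK3 : 0 < K ^ 3) by (apply pow_lt; lra).
  assert (Hmpos : 0 < INR m).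
  { destruct m; [simpl in Hdm; lra|]. apply lt_0_INR; lia. }
  set (lam := INR m * n RR / (2 * K * RR)).
  assert (Hlam : 0 < lam) by (unfold lam; apply Rdiv_lt_0_compat; nra).
  destruct (fine_grid RR lam ltac:(lra) Hlam) as [M [h [HM [Hh [Hlh HxM]]]]].
  set (x := grid (RR / 2) h) in HxM.
  set (phi := fun i => n (x i)).
  set (rho := lam * h / 3).
  set (bR := fun j => indicator (right_bad phi rho M j)).
  set (bL := fun j => indicator (left_bad phi rho j)).
  set (cells := fun b : nat -> R => map (fun j => (x j, x j + h * b j)) (seq 0 M)).
  (* [[R, 2R]] is covered by the bad cells and the given cover of the good set *)
  assert (Hcover : 2 * RR - RR <= sumlen (cells bR ++ cells bL) + L).
  { apply (cover_length RR (2 * RR) _ a b L); auto; [lra| |].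
    - intros iv Hiv. apply in_app_or in Hiv.
      destruct Hiv as [Hiv|Hiv]; apply in_map_iff in Hiv; destruct Hiv as [j [<- _]]; simpl.
      + pose proof (indicator_bounds (right_bad phi rho M j)). unfold bR. nra.
      + pose proof (indicator_bounds (left_bad phi rho j)). unfold bL. nra.
    - intros r Hr.
      assert (Hbudget : lam * (2 * RR) <= INR m * n RR / K)
        by (unfold lam; apply Req_le; field; lra).
      destruct (grid_point_classified nu m M RR h lam r) as [[j [Hj Hin]]|[[j [Hj Hin]]|Hgood]];
        try assumption; try lra.
      + left. exists (x j, x j + h * bR j). split; [|exact Hin].
        apply in_or_app; left. apply in_map_iff. eauto.
      + left. exists (x j, x j + h * bL j). split; [|exact Hin].
        apply in_or_app; right. apply in_map_iff. eauto.
      + right. apply Hcov. split; [exact Hgood|lra]. }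
  assert (Hphi : forall j, (j < M)%nat -> phi j <= phi (S j)).
  { intros j _. unfold phi, x. apply n_mono; rewrite ?grid_S; unfold grid;
      pose proof (pos_INR j); nra. }
  assert (Hincr : phi M - phi O <= K * K * n RR).
  { unfold phi. rewrite HxM. replace (x O) with (RR / 2) by (unfold x, grid; simpl; ring).
    pose proof (n_nonneg (RR / 2) ltac:(lra)). pose proof (n_quadruple RR ltac:(lra)). lra. }
  pose proof (bad_cells_length phi lam h (K * K * n RR) M Hlam Hh Hphi Hincr) as Hbad.
  unfold cells in Hcover. rewrite sumlen_app, !sumlen_cells in Hcover.
  replace (6 * (K * K * n RR) / lam) with (12 * K ^ 3 * RR / INR m) in Hbad
    by (unfold lam; field; lra).
  assert (12 * K ^ 3 * RR / INR m <= delta * RR).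
  { apply Rmult_le_reg_r with (INR m); [lra|].
    replace (12 * K ^ 3 * RR / INR m * INR m) with (12 * K ^ 3 * RR) by (field; lra). nra. }
  unfold bR, bL, rho in Hcover. lra.
Qed.

(* Degenerate case [n R = 0]: then [n] vanishes on [[0, 4R]], every point of
   [[R, 2R]] is good, and the covered length is the full [R]. *)
Lemma meas_ge_zero (nu m : nat) (RR delta : R) :
  K <= 2 ^ nu -> (2 * nu <= m)%nat -> 0 <= delta -> 2 * r0 <= RR -> n RR = 0 ->
  meas_ge (fun r => F_set n r0 (INR m) r /\ RR <= r <= 2 * RR) ((1 - delta) * RR).
Proof.
  intros Hnu Hm Hdel HR HA0 a b Hab Hcov L HL.
  assert (Z0 : forall t, 0 <= t <= 4 * RR -> n t = 0).
  { intros t Ht. pose proof (n_nonneg t ltac:(lra)).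
    pose proof (n_mono t (4 * RR) ltac:(lra) ltac:(lra)).
    pose proof (n_quadruple RR ltac:(lra)). rewrite HA0 in *. nra. }
  assert (2 * RR - RR <= sumlen nil + L); [|simpl in *; nra].
  apply (cover_length RR (2 * RR) nil a b L); auto; [lra|simpl; tauto|].
  intros r Hr. right. apply Hcov. split; [|lra].
  apply (F_set_of_local nu m r); auto; [lra| |];
    intros t Ht; rewrite (Z0 t), (Z0 r) by lra; lra.
Qed.

End CountingFunction.

(* Choose [nu] with [K <= 2^nu] and an exponent [m >= 2 nu] with
   [12 K^3 <= delta m]; then each [[R, 2R]] is covered up to [delta R] by
   [F_set] with [mu = m], by the two cases above. *)
Theorem lemma4 (f : Cx -> Cx) (n : R -> R) (r0 K : R) :
  entire f -> finite_order f -> zero_counting f n ->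
  0 < r0 -> 1 < K ->
  (forall r, r0 <= r -> n (2 * r) <= K * n r) ->
  forall delta, 0 < delta ->
  exists mu, 0 < mu /\
    forall R, 2 * r0 <= R ->
      meas_ge (fun r => F_set n r0 mu r /\ R <= r <= 2 * R) ((1 - delta) * R).
Proof.
  intros _ _ Z Hr0 HK Hd delta Hdel.
  pose proof (counting_nonneg f n Z) as Hnn.
  pose proof (counting_mono f n Z) as Hmono.
  pose proof (counting_nat f n Z) as Hnat.
  destruct (nat_unbounded K) as [nu Hnu0].
  assert (Hnu : K <= 2 ^ nu) by (pose proof (pow2_gt nu); lra).
  destruct (nat_unbounded (12 * K ^ 3 / delta + 2 * INR nu)) as [m Hm0].
  assert (Hq : 0 <= 12 * K ^ 3 / delta)
    by (apply Rlt_le, Rdiv_lt_0_compat; [pose proof (pow_lt K 3 ltac:(lra)); lra | lra]).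
  pose proof (pos_INR nu).
  assert (Hm2 : (2 * nu <= m)%nat) by (apply INR_le; rewrite mult_INR; simpl (INR 2); lra).
  assert (Hmbig : 12 * K ^ 3 <= delta * INR m).
  { replace (12 * K ^ 3) with (delta * (12 * K ^ 3 / delta)) by (field; lra).
    apply Rmult_le_compat_l; lra. }
  exists (INR m). split; [lra|].
  intros RR HRR.
  destruct (Rle_lt_or_eq_dec 0 (n RR) (Hnn RR ltac:(lra))) as [Apos|A0].
  - apply (meas_ge_positive n r0 K Hnn Hmono Hnat Hr0 HK Hd nu); auto.
  - apply (meas_ge_zero n r0 K Hnn Hmono Hr0 HK Hd nu); auto; lra.
Qed.
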